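(* Let $k\ge1$ and $d$ be integers with $k\mid d$, and set $m=d/k$. Let $X_{ij}\in\mathbb{R}^{1\times m}$ for $i=1,\dots,n$, $j=1,\dots,k$, let $w^*\in\mathbb{R}^m$, and suppose $X_{ij}w^*\neq0$ for all $i,j$. Let $y_i=\sum_{j=1}^k(X_{ij}w^* )_+$ and $r\in\mathbb{R}^m$. Consider the linear program $$\max_{w\in\mathbb{R}^m,\ z\in\mathbb{R}^{n\times k}}\ r^Tw\quad\text{s.t.}\quad z_{ij}\ge0,\ \ \sum_{j=1}^kz_{ij}=y_i\ (i=1,\dots,n),\ \ z_{ij}\ge X_{ij}w\ \ \forall (i,j).$$ For $i=1,\dots,n$ let $R_i=\{j\in\{1,\dots,k\}: X_{ij}w^*>0\}$. Then the feasible point $(w^*,z^* )$ with $z^*_{ij}=(X_{ij}w^* )_+$ is an optimal solution of this linear program if and only if $$r\in\operatorname{cone}\Big\{\textstyle\sum_{j\in R_i}X_{ij}^T:\ i=1,\dots,n\Big\},$$ equivalently, iff there exists $v\in\mathbb{R}^n$ with $v_{S_j}\ge0$ for all $j$ and $\sum_{j=1}^kX_{S_j,j}^Tv_{S_j}=r$, where $S_j=\{i: X_{ij}w^*>0\}$, $v_{S_j}$ is the subvector of $v$ indexed by $S_j$, and $X_{S_j,j}$ is the matrix with rows $X_{ij}$, $i\in S_j$.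
   Context: This models a one-hidden-layer convolutional network with a filter $w\in\mathbb{R}^{d/k}$ applied without overlap: $X_{ij}$ is the $j$-th length-$d/k$ block of the $i$-th data vector. $(u)_+=\max(u,0)$; $\operatorname{cone}(A)$ denotes the set of nonnegative linear combinations of vectors in $A$; an empty sum is the zero vector. *)

(* the statement is purely order-algebraic (an LP optimality
   criterion), so it is stated over an arbitrary real field R. *)
From HB Require Import structures.
From mathcomp Require Import all_boot all_order all_algebra.
Set Implicit Arguments. Unset Strict Implicit. Unset Printing Implicit Defensive.
Import Order.TTheory GRing.Theory Num.Theory.
Local Open Scope ring_scope.

Definition pospart (R : realFieldType) (u : R) : R := Num.max u 0.

Definition rdot (R : realFieldType) (m : nat) (x : 'rV[R]_m) (w : 'cV[R]_m) : R :=
  (x *m w) 0 0.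

Definition labels (R : realFieldType) (n k m : nat)
  (X : 'I_n -> 'I_k -> 'rV[R]_m) (wstar : 'cV[R]_m) (i : 'I_n) : R :=
  \sum_(j < k) pospart (rdot (X i j) wstar).

Definition lp_feasible (R : realFieldType) (n k m : nat)
  (X : 'I_n -> 'I_k -> 'rV[R]_m) (y : 'I_n -> R)
  (w : 'cV[R]_m) (z : 'M[R]_(n, k)) : Prop :=
  [/\ forall i j, 0 <= z i j,
      forall i, \sum_(j < k) z i j = y i
    & forall i j, rdot (X i j) w <= z i j].

Definition lp_obj (R : realFieldType) (m : nat) (r w : 'cV[R]_m) : R :=
  (r^T *m w) 0 0.

Definition lp_optimal (R : realFieldType) (n k m : nat)
  (X : 'I_n -> 'I_k -> 'rV[R]_m) (y : 'I_n -> R) (r : 'cV[R]_m)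
  (w : 'cV[R]_m) (z : 'M[R]_(n, k)) : Prop :=
  lp_feasible X y w z /\
  forall w' z', lp_feasible X y w' z' -> lp_obj r w' <= lp_obj r w.

Definition in_cone (R : realFieldType) (n m : nat)
  (F : 'I_n -> 'cV[R]_m) (v : 'cV[R]_m) : Prop :=
  exists c : 'I_n -> R, (forall i, 0 <= c i) /\ v = \sum_(i < n) c i *: F i.

From HB Require Import structures.
From mathcomp Require Import all_boot all_order all_algebra.
From mathcomp Require Import ring lra.
Set Implicit Arguments. Unset Strict Implicit. Unset Printing Implicit Defensive.
Import Order.TTheory GRing.Theory Num.Theory.
Local Open Scope ring_scope.

(* If r lies in the cone of the active sums A_i = sum_{j in R_i} X_ij^T, then
   r^T w = sum_i c_i A_i^T w <= sum_i c_i y_i = r^T w* for every feasible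
   (w, z), because A_i^T w <= sum_{j in R_i} z_ij <= y_i.  Conversely, if r is
   outside the cone, Farkas' lemma yields a direction d with A_i^T d <= 0 for
   all i and r^T d > 0.  Since no X_ij w* vanishes, a small step w = w* + t d
   keeps every sign pattern, so the active sets and hence the constraints
   A_i^T w <= y_i stay satisfiable, while the objective strictly increases. *)

Section Dot.
Variables (R : realFieldType) (m : nat).
Implicit Types (u v w : 'cV[R]_m).

Definition dot u v : R := (u^T *m v) 0 0.

Lemma dotC u v : dot u v = dot v u.
Proof. by rewrite /dot !mxE; apply: eq_bigr => l _; rewrite !mxE mulrC. Qed.

Lemma dotDl u v w : dot (u + v) w = dot u w + dot v w.
Proof. by rewrite /dot linearD mulmxDl mxE. Qed.

Lemma dotZl a u w : dot (a *: u) w = a * dot u w.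
Proof. by rewrite /dot linearZ -scalemxAl mxE. Qed.

Lemma dotNl u w : dot (- u) w = - dot u w.
Proof. by rewrite -scaleN1r dotZl mulN1r. Qed.

Lemma dotBl u v w : dot (u - v) w = dot u w - dot v w.
Proof. by rewrite dotDl dotNl. Qed.

Lemma dotDr u v w : dot w (u + v) = dot w u + dot w v.
Proof. by rewrite !(dotC w) dotDl. Qed.

Lemma dotBr u v w : dot w (u - v) = dot w u - dot w v.
Proof. by rewrite !(dotC w) dotBl. Qed.

Lemma dotZr a u w : dot w (a *: u) = a * dot w u.
Proof. by rewrite !(dotC w) dotZl. Qed.

Lemma dot0l w : dot 0 w = 0.
Proof. by rewrite -(scale0r 0) dotZl mul0r. Qed.

Lemma dot_suml I (s : seq I) (P : pred I) (F : I -> 'cV[R]_m) w :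
  dot (\sum_(i <- s | P i) F i) w = \sum_(i <- s | P i) dot (F i) w.
Proof. by apply: (big_morph (dot^~ w)) => [u v|]; rewrite ?dotDl ?dot0l. Qed.

Lemma dot_gt0 u : u != 0 -> 0 < dot u u.
Proof.
move=> u_neq0; have -> : dot u u = \sum_l u l 0 ^+ 2.
  by rewrite /dot mxE; apply: eq_bigr => l _; rewrite mxE.
rewrite lt_def sumr_ge0 ?andbT => [|l _]; last exact: sqr_ge0.
apply: contra u_neq0 => /eqP/psumr_eq0P u0; apply/eqP/matrixP => l j.
rewrite ord1 mxE; apply/eqP; rewrite -sqrf_eq0 u0 //= => l' _.
exact: sqr_ge0.
Qed.

End Dot.

Lemma ord_max_widen_ind n (P : 'I_n.+1 -> Prop) :
  P ord_max -> (forall i : 'I_n, P (widen_ord (leqnSn n) i)) -> forall i, P i.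
Proof.
move=> Pmax Pwiden i; case: (unliftP ord_max i) => [j ->|-> //].
by have -> : lift ord_max j = widen_ord (leqnSn n) j by apply/val_inj/lift_max.
Qed.

Section Farkas.
Variables (R : realFieldType) (m : nat).
Implicit Types (u v w : 'cV[R]_m).

Lemma in_cone0 (a : 'I_0 -> 'cV[R]_m) : in_cone a 0.
Proof. by exists (fun=> 0); rewrite big_ord0. Qed.

Lemma in_cone_recr n (a : 'I_n.+1 -> 'cV[R]_m) v c : 0 <= c ->
  in_cone (fun i => a (widen_ord (leqnSn n) i)) (v - c *: a ord_max) ->
  in_cone a v.
Proof.
move=> c_ge0 [b [b_ge0 ebv]].
exists (fun i => if insub (val i) is Some i' then b i' else c); split.
  by move=> i; case: insub.
rewrite big_ord_recr /= insubN ?ltnn // -[v](subrK (c *: a ord_max)) ebv.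
by congr (_ + _); apply: eq_bigr => i _; rewrite valK.
Qed.

Definition proj_along (p d v : 'cV[R]_m) : 'cV[R]_m :=
  v - (dot v d / dot p d) *: p.

Lemma dot_proj_along p d v e :
  dot (proj_along p d v) e = dot v (e - (dot p e / dot p d) *: d).
Proof.
rewrite /proj_along dotBl dotZl dotBr dotZr (dotC v d); congr (_ - _); ring.
Qed.

Lemma proj_along_self p d : dot p d != 0 -> proj_along p d p = 0.
Proof. by move=> pd_neq0; rewrite /proj_along divff // scale1r subrr. Qed.

Lemma in_cone_proj_along n (a : 'I_n -> 'cV[R]_m) p d v :
  0 < dot p d -> (forall i, dot (a i) d <= 0) -> 0 < dot v d ->
  in_cone (fun i => proj_along p d (a i)) (proj_along p d v) ->
  exists2 c, 0 <= c & in_cone a (v - c *: p).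
Proof.
move=> pd_gt0 ad_le0 vd_gt0 [b [b_ge0 ebv]].
exists (dot v d / dot p d - \sum_i b i * (dot (a i) d / dot p d)).
  rewrite subr_ge0 (le_trans _ (ltW (divr_gt0 vd_gt0 pd_gt0))) //.
  apply: sumr_le0 => i _; rewrite mulr_ge0_le0 // mulr_le0_ge0 //.
  by rewrite invr_ge0 ltW.
exists b; split => //; rewrite scalerBl opprB addrA addrAC.
rewrite -[v - _]/(proj_along p d v) ebv scaler_suml -big_split /=.
by apply: eq_bigr => i _; rewrite scalerBr scalerA subrK.
Qed.

Theorem farkas n (a : 'I_n -> 'cV[R]_m) v :
  in_cone a v \/ exists d, (forall i, dot (a i) d <= 0) /\ 0 < dot v d.
Proof.
elim: n a v => [|n IH] a v.
  have [->|v_neq0] := eqVneq v 0; first by left; exact: in_cone0.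
  by right; exists v; split => [[]|]; last exact: dot_gt0.
pose a' i := a (widen_ord (leqnSn n) i); pose p := a ord_max.
have [cone_v|[d [a'd_le0 vd_gt0]]] := IH a' v.
  by left; apply: (in_cone_recr (le_refl 0)); rewrite scale0r subr0.
have [pd_le0|pd_gt0] := leP (dot p d) 0.
  by right; exists d; split => //; exact: ord_max_widen_ind.
(* Fourier-Motzkin step: eliminate p by projecting along it onto d^perp. *)
have [cone_proj|[e [proj_a'e_le0 proj_ve_gt0]]] :=
  IH (fun i => proj_along p d (a' i)) (proj_along p d v).
  have [c c_ge0 cone_c] := in_cone_proj_along pd_gt0 a'd_le0 vd_gt0 cone_proj.
  by left; exact: in_cone_recr cone_c.
right; exists (e - (dot p e / dot p d) *: d).
rewrite -dot_proj_along; split => //; apply: ord_max_widen_ind => [|i].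
  by rewrite -dot_proj_along proj_along_self ?dot0l ?gt_eqF.
by have := proj_a'e_le0 i; rewrite dot_proj_along.
Qed.

End Farkas.

Lemma pospart_ge0 (R : realFieldType) (u : R) : 0 <= pospart u.
Proof. by rewrite /pospart le_max lexx orbT. Qed.

Lemma pospart_ge (R : realFieldType) (u : R) : u <= pospart u.
Proof. by rewrite /pospart le_max lexx. Qed.

Lemma pospartE (R : realFieldType) (u : R) : pospart u = if 0 < u then u else 0.
Proof. by rewrite /pospart /Num.max; case: ltgtP. Qed.

Lemma small_step_keeps_sign (R : realFieldType) (I : finType) (u e : I -> R) :
  (forall i, u i != 0) ->
  exists2 t, 0 < t & forall i, (0 < u i + t * e i) = (0 < u i).
Proof.
move=> u_neq0; pose S := \sum_i `|e i| / `|u i|.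
have S_ge0 : 0 <= S by apply: sumr_ge0 => i _; exact: divr_ge0.
have S1_gt0 : 0 < 1 + S by rewrite ltr_wpDr.
exists (1 + S)^-1 => [|i]; first by rewrite invr_gt0.
have u_gt0 : 0 < `|u i| by rewrite normr_gt0.
have le_S : `|e i| / `|u i| <= S.
  by rewrite /S (bigD1 i) //= lerDl; apply: sumr_ge0 => j _; exact: divr_ge0.
have small : `|(1 + S)^-1 * e i| < `|u i|.
  rewrite normrM gtr0_norm ?invr_gt0 // mulrC ltr_pdivrMr //.
  rewrite mulrC -ltr_pdivrMr //.
  by apply: le_lt_trans le_S _; rewrite ltrDr ltr01.
move: small; rewrite ltr_norml; set te := _ * e i => /andP[lo hi].
have [u_lt0|u_gt0'|u0] := ltgtP (u i) 0; last by case/eqP: (u_neq0 i).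
  rewrite ltr0_norm // in hi; apply/negbTE; rewrite -leNgt; lra.
by rewrite gtr0_norm // in lo; lra.
Qed.

Section ReluLP.
Variables (R : realFieldType) (n k m : nat) (X : 'I_n -> 'I_k -> 'rV[R]_m).
Implicit Types (w : 'cV[R]_m) (y : 'I_n -> R).

Definition active_sum w i : 'cV[R]_m :=
  \sum_(j < k | 0 < rdot (X i j) w) (X i j)^T.

Definition pospart_mx w : 'M[R]_(n, k) :=
  \matrix_(i, j) pospart (rdot (X i j) w).

Lemma rdotE (x : 'rV[R]_m) w : rdot x w = dot x^T w.
Proof. by rewrite /dot trmxK. Qed.

Lemma dot_active_sum w w' i :
  dot (active_sum w i) w' = \sum_(j < k | 0 < rdot (X i j) w) rdot (X i j) w'.
Proof. by rewrite dot_suml; apply: eq_bigr => j _; rewrite rdotE. Qed.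

Lemma labels_active_sum w i : labels X w i = dot (active_sum w i) w.
Proof.
by rewrite dot_active_sum big_mkcond; apply: eq_bigr => j _; rewrite pospartE.
Qed.

Lemma pospart_mx_feasible w : lp_feasible X (labels X w) w (pospart_mx w).
Proof.
split => [i j|i|i j]; rewrite ?mxE ?pospart_ge0 ?pospart_ge //.
by apply: eq_bigr => j _; rewrite mxE.
Qed.

Lemma lp_feasible_active_sum_le y w z w0 i :
  lp_feasible X y w z -> dot (active_sum w0 i) w <= y i.
Proof.
move=> [z_ge0 <- Xw_le_z]; rewrite dot_active_sum.
apply: le_trans (_ : \sum_(j < k | 0 < rdot (X i j) w0) z i j <= _).
  by apply: ler_sum => j _; exact: Xw_le_z.
by rewrite [leRHS](bigID (fun j => 0 < rdot (X i j) w0)) lerDl sumr_ge0.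
Qed.

Lemma lp_feasible_slack y w : (0 < k)%N -> (forall i, labels X w i <= y i) ->
  exists z, lp_feasible X y w z.
Proof.
move=> k_gt0 le_y; pose j0 := Ordinal k_gt0.
pose slack : 'M[R]_(n, k) :=
  \matrix_(i, j) if j == j0 then y i - labels X w i else 0.
have slack_ge0 i j : 0 <= slack i j.
  by rewrite mxE; case: eqP; rewrite ?subr_ge0.
exists (pospart_mx w + slack); split => [i j|i|i j].
- by rewrite mxE addr_ge0 // mxE pospart_ge0.
- under eq_bigr do rewrite mxE [pospart_mx _ _ _]mxE [slack _ _]mxE.
  by rewrite big_split /= -big_mkcond big_pred1_eq addrC subrK.
- by rewrite mxE [pospart_mx _ _ _]mxE (le_trans (pospart_ge _)) // lerDl.
Qed.

Lemma in_cone_lp_optimal w r :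
  in_cone (active_sum w) r -> lp_optimal X (labels X w) r w (pospart_mx w).
Proof.
move=> [c [c_ge0 ->]]; split=> [|w' z' feas]; first exact: pospart_mx_feasible.
rewrite /lp_obj -!/(dot _ _) !dot_suml; apply: ler_sum => i _.
rewrite !dotZl ler_wpM2l // -labels_active_sum.
exact: lp_feasible_active_sum_le feas.
Qed.

Lemma lp_optimal_in_cone w r z :
  (0 < k)%N -> (forall i j, rdot (X i j) w != 0) ->
  lp_optimal X (labels X w) r w z -> in_cone (active_sum w) r.
Proof.
move=> k_gt0 Xw_neq0 [_ w_opt].
have [//|[d [Ad_le0 rd_gt0]]] := farkas (active_sum w) r.
have [t t_gt0 same_sign] := small_step_keeps_sign
  (fun ij : 'I_n * 'I_k => rdot (X ij.1 ij.2) d) (fun ij => Xw_neq0 ij.1 ij.2).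
pose w' := w + t *: d.
have active_w' i : active_sum w' i = active_sum w i.
  by apply: eq_bigl => j; rewrite -(same_sign (i, j)) !rdotE dotDr dotZr.
have [z' feas] : exists z', lp_feasible X (labels X w) w' z'.
  apply: lp_feasible_slack => // i.
  rewrite !labels_active_sum active_w' /w' dotDr dotZr gerDl.
  by rewrite mulr_ge0_le0 ?Ad_le0 ?ltW.
have := w_opt _ _ feas; rewrite /lp_obj -!/(dot _ _) /w' dotDr dotZr gerDl.
by rewrite leNgt mulr_gt0.
Qed.

Lemma sum_active_exchange w (v : 'I_n -> R) :
  \sum_(j < k) \sum_(i < n | 0 < rdot (X i j) w) v i *: (X i j)^T =
  \sum_(i < n) v i *: active_sum w i.
Proof.
under eq_bigr do rewrite big_mkcond; rewrite exchange_big /=.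
by apply: eq_bigr => i _; rewrite /active_sum scaler_sumr [RHS]big_mkcond.
Qed.

Lemma in_cone_active_sumP w r :
  in_cone (active_sum w) r <->
  exists v : 'I_n -> R,
    (forall j i, 0 < rdot (X i j) w -> 0 <= v i) /\
    \sum_(j < k) \sum_(i < n | 0 < rdot (X i j) w) v i *: (X i j)^T = r.
Proof.
split=> [[c [c_ge0 ->]]|[v [v_ge0 <-]]].
  by exists c; split=> [j i _|]; rewrite ?sum_active_exchange.
exists (fun i => pospart (v i)); split=> [i|]; first exact: pospart_ge0.
rewrite sum_active_exchange; apply: eq_bigr => i _.
have [j active_j|inactive] := pickP (fun j => 0 < rdot (X i j) w).
  by rewrite /pospart max_l // (v_ge0 j).
by rewrite /active_sum big_pred0 // !scaler0.
Qed.

End ReluLP.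

Theorem mainTheorem3 (R : realFieldType) (n k d : nat)
  (hk : (0 < k)%N) (hkd : (k %| d)%N)
  (X : 'I_n -> 'I_k -> 'rV[R]_(d %/ k)) (wstar : 'cV[R]_(d %/ k))
  (hnz : forall i j, rdot (X i j) wstar != 0)
  (r : 'cV[R]_(d %/ k)) :
  let y := labels X wstar in
  let zstar : 'M[R]_(n, k) := \matrix_(i, j) pospart (rdot (X i j) wstar) in
  (lp_optimal X y r wstar zstar <->
     in_cone (fun i => \sum_(j < k | 0 < rdot (X i j) wstar) (X i j)^T) r)
  /\
  (lp_optimal X y r wstar zstar <->
     exists v : 'I_n -> R,
       (forall j : 'I_k, forall i : 'I_n, 0 < rdot (X i j) wstar -> 0 <= v i) /\
       \sum_(j < k) \sum_(i < n | 0 < rdot (X i j) wstar) v i *: (X i j)^T = r).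
Proof.
move=> y zstar.
have optimal_iff_cone :
    lp_optimal X y r wstar zstar <-> in_cone (active_sum X wstar) r.
  by split; [exact: lp_optimal_in_cone | exact: in_cone_lp_optimal].
by split=> //; rewrite optimal_iff_cone; exact: in_cone_active_sumP.
Qed.
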